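(* If $S$ is a DRC-semigroup and $p_1,\dots,p_k\in\mathbf P(S)$, then $\Theta_{p_1\cdots p_k}=\theta_{p_1}\cdots\theta_{p_k}$ and $\Delta_{p_1\cdots p_k}=\delta_{p_k}\cdots\delta_{p_1}$.
   Context: A DRC-semigroup is $(S,\cdot,D,R)$, $(S,\cdot)$ a semigroup, $D,R:S\to S$ with, for all $a,b$: $D(a)a=a$, $aR(a)=a$; $D(ab)=D(aD(b))$, $R(ab)=R(R(a)b)$; $D(ab)=D(a)D(ab)D(a)$, $R(ab)=R(b)R(ab)R(b)$; $R(D(a))=D(a)$, $D(R(a))=R(a)$. $\mathbf P(S)=\{D(a):a\in S\}$. Maps are written on the right of their arguments and composed left to right. For $p,q\in\mathbf P(S)$: $q\theta_p=R(qp)$, $q\delta_p=D(pq)$. For $a\in S$: $\Theta_a,\Delta_a:\mathbf P(S)\to\mathbf P(S)$, $p\Theta_a=R(pa)$, $p\Delta_a=D(ap)$. *)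

From Stdlib Require Import List.
Import ListNotations.

Record DRCSemigroup := {
  car :> Type;
  mul : car -> car -> car;
  Dop : car -> car;
  Rop : car -> car;
  mulA : forall a b c, mul a (mul b c) = mul (mul a b) c;
  D_id : forall a, mul (Dop a) a = a;
  R_id : forall a, mul a (Rop a) = a;
  D_mul : forall a b, Dop (mul a b) = Dop (mul a (Dop b));
  R_mul : forall a b, Rop (mul a b) = Rop (mul (Rop a) b);
  D_mul2 : forall a b, Dop (mul a b) = mul (mul (Dop a) (Dop (mul a b))) (Dop a);
  R_mul2 : forall a b, Rop (mul a b) = mul (mul (Rop b) (Rop (mul a b))) (Rop b);
  RD : forall a, Rop (Dop a) = Dop a;
  DR : forall a, Dop (Rop a) = Rop a
}.

Definition isProj (S : DRCSemigroup) (x : S) : Prop := exists a : S, x = Dop S a.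
Definition Proj (S : DRCSemigroup) := { x : S | isProj S x }.

Lemma D_isProj (S : DRCSemigroup) (a : S) : isProj S (Dop S a).
Proof. exists a; reflexivity. Qed.

Lemma R_isProj (S : DRCSemigroup) (a : S) : isProj S (Rop S a).
Proof. exists (Rop S a); symmetry; apply DR. Qed.

Definition mkD (S : DRCSemigroup) (a : S) : Proj S := exist _ (Dop S a) (D_isProj S a).
Definition mkR (S : DRCSemigroup) (a : S) : Proj S := exist _ (Rop S a) (R_isProj S a).

Definition theta (S : DRCSemigroup) (p : Proj S) : Proj S -> Proj S :=
  fun q => mkR S (mul S (proj1_sig q) (proj1_sig p)).
Definition delta (S : DRCSemigroup) (p : Proj S) : Proj S -> Proj S :=
  fun q => mkD S (mul S (proj1_sig p) (proj1_sig q)).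

Definition Theta (S : DRCSemigroup) (a : S) : Proj S -> Proj S :=
  fun p => mkR S (mul S (proj1_sig p) a).
Definition Delta (S : DRCSemigroup) (a : S) : Proj S -> Proj S :=
  fun p => mkD S (mul S a (proj1_sig p)).

Definition prodS (S : DRCSemigroup) (a0 : S) (l : list S) : S :=
  fold_left (mul S) l a0.

(* Maps written on the right, composed left to right:
   compL [f1; ...; fk] x = x f1 f2 ... fk  (i.e. apply f1 first). *)
Definition compL {X : Type} (fs : list (X -> X)) : X -> X :=
  fun x => fold_left (fun y f => f y) fs x.

(* Neither identity uses that the factors are projections: the axiom
   R(ab) = R(R(a)b) says exactly that a |-> Theta_a turns products into
   left-to-right composites, and dually D(ab) = D(aD(b)) makes a |-> Delta_a
   reverse them. *)
From Stdlib Require Import List FunctionalExtensionality ProofIrrelevance.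
Import ListNotations.

Lemma compL_app {X : Type} (fs gs : list (X -> X)) (x : X) :
  compL (fs ++ gs) x = compL gs (compL fs x).
Proof. apply fold_left_app. Qed.

Section FoldComposition.

Variables (M X : Type) (op : M -> M -> M) (F : M -> X -> X).

Lemma fold_left_compL_hom :
  (forall a b x, F (op a b) x = F b (F a x)) ->
  forall l a x, F (fold_left op l a) x = compL (map F l) (F a x).
Proof.
  intros Fop l; induction l as [|b l IH]; intros a x; simpl.
  - reflexivity.
  - rewrite IH, Fop. reflexivity.
Qed.

Lemma fold_left_compL_antihom :
  (forall a b x, F (op a b) x = F a (F b x)) ->
  forall l a x, F (fold_left op l a) x = F a (compL (rev (map F l)) x).
Proof.
  intros Fop l; induction l as [|b l IH]; intros a x; simpl.
  - reflexivity.
  - rewrite IH, Fop, compL_app. reflexivity.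
Qed.

End FoldComposition.

Section ThetaDelta.

Variable S : DRCSemigroup.

Lemma mkR_congr (a b : S) : Rop S a = Rop S b -> mkR S a = mkR S b.
Proof. intros E. apply eq_exist_uncurried. exists E. apply proof_irrelevance. Qed.

Lemma mkD_congr (a b : S) : Dop S a = Dop S b -> mkD S a = mkD S b.
Proof. intros E. apply eq_exist_uncurried. exists E. apply proof_irrelevance. Qed.

Lemma Theta_mul (a b : S) (p : Proj S) :
  Theta S (mul S a b) p = Theta S b (Theta S a p).
Proof. apply mkR_congr. simpl. rewrite mulA. apply R_mul. Qed.

Lemma Delta_mul (a b : S) (p : Proj S) :
  Delta S (mul S a b) p = Delta S a (Delta S b p).
Proof. apply mkD_congr. simpl. rewrite <- mulA. apply D_mul. Qed.

End ThetaDelta.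

Theorem lemma8p18 (S : DRCSemigroup) (p0 : Proj S) (ps : list (Proj S)) :
  Theta S (prodS S (proj1_sig p0) (map (@proj1_sig _ _) ps))
    = compL (map (theta S) (p0 :: ps))
  /\
  Delta S (prodS S (proj1_sig p0) (map (@proj1_sig _ _) ps))
    = compL (rev (map (delta S) (p0 :: ps))).
Proof.
  unfold prodS; split; apply functional_extensionality; intro x.
  - rewrite (fold_left_compL_hom _ _ _ _ (Theta_mul S)), map_map.
    reflexivity.
  - rewrite (fold_left_compL_antihom _ _ _ _ (Delta_mul S)), map_map.
    simpl. rewrite compL_app. reflexivity.
Qed.
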